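(* The minimal functor $\mathcal M_{\min}$ is (admits the structure of) a lax monoidal functor from $(\mathbf{Ord},\times,(\mathbf 1,=))$ to $(\mathbf{Set},\times,\mathbf 1)$.
   Context: $\mathbf{Ord}$ is the category of posets and monotone maps, with cartesian product $\times$ (product order) and the one-point poset $\mathbf 1$; $\mathbf{Set}$ has the cartesian monoidal structure. For a poset $X$, $\mathcal M(X)$ is the set of nonempty finite subsets of $X$ whose elements are pairwise incomparable. For $S\subseteq X$, $S_{\circ}$ denotes the set of minimal elements of $S$. The minimal functor $\mathcal M_{\min}:\mathbf{Ord}\to\mathbf{Set}$ is given by $\mathcal M_{\min}(X)=\mathcal M(X)$ (as a set) and $\mathcal M_{\min}(f)(S)=(f(S))_{\circ}$ for monotone $f:X\to Y$. *)

From Stdlib Require Import List Classical.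

Record Poset := {
  carrier :> Type;
  le : carrier -> carrier -> Prop;
  le_refl : forall x, le x x;
  le_trans : forall x y z, le x y -> le y z -> le x z;
  le_antisym : forall x y, le x y -> le y x -> x = y
}.
Arguments le {p} _ _.

Record Mono (X Y : Poset) := {
  mfun :> X -> Y;
  mfun_mono : forall x y, le x y -> le (mfun x) (mfun y)
}.

Definition mid (X : Poset) : Mono X X := {| mfun := fun x => x; mfun_mono := fun _ _ h => h |}.

Definition mcomp {X Y Z : Poset} (g : Mono Y Z) (f : Mono X Y) : Mono X Z :=
  {| mfun := fun x => g (f x);
     mfun_mono := fun x y h => mfun_mono _ _ g _ _ (mfun_mono _ _ f _ _ h) |}.

Definition PProd (X Y : Poset) : Poset.
Proof.
  refine {| carrier := (X * Y)%type;
            le := fun p q => le (fst p) (fst q) /\ le (snd p) (snd q) |}.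
  - intros [a b]; split; apply le_refl.
  - intros [a b] [c d] [e f] [h1 h2] [h3 h4]; split; eapply le_trans; eauto.
  - intros [a b] [c d] [h1 h2] [h3 h4]; simpl in *.
    f_equal; apply le_antisym; auto.
Defined.

Definition One : Poset.
Proof.
  refine {| carrier := unit; le := fun x y => x = y |}.
  - reflexivity.
  - intros; subst; reflexivity.
  - intros; assumption.
Defined.

Definition mprod {X X' Y Y' : Poset} (f : Mono X X') (g : Mono Y Y') :
  Mono (PProd X Y) (PProd X' Y').
Proof.
  refine {| mfun := fun p : PProd X Y => ((f (fst p), g (snd p)) : PProd X' Y') |}.
  intros [a b] [c d] [h1 h2]; split; simpl; apply mfun_mono; assumption.
Defined.

Definition massoc (X Y Z : Poset) : Mono (PProd (PProd X Y) Z) (PProd X (PProd Y Z)).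
Proof.
  refine {| mfun := fun p : PProd (PProd X Y) Z =>
              ((fst (fst p), (snd (fst p), snd p)) : PProd X (PProd Y Z)) |}.
  intros [[a b] c] [[d e] f] [[h1 h2] h3]; simpl in *; repeat split; assumption.
Defined.

Definition mlunit (X : Poset) : Mono (PProd One X) X.
Proof.
  refine {| mfun := fun p : PProd One X => snd p |}.
  intros [a b] [c d] [h1 h2]; exact h2.
Defined.

Definition mrunit (X : Poset) : Mono (PProd X One) X.
Proof.
  refine {| mfun := fun p : PProd X One => fst p |}.
  intros [a b] [c d] [h1 h2]; exact h1.
Defined.

Definition finite_set {T : Type} (S : T -> Prop) : Prop :=
  exists l : list T, forall x, S x -> In x l.

Definition isM {X : Poset} (S : X -> Prop) : Prop :=
  (exists x, S x) /\ finite_set S /\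
  (forall x y, S x -> S y -> x <> y -> ~ le x y).

Definition MM (X : Poset) : Type := { S : X -> Prop | isM S }.

Definition minset {X : Poset} (S : X -> Prop) : X -> Prop :=
  fun x => S x /\ forall y, S y -> le y x -> y = x.

Definition image {X Y : Type} (f : X -> Y) (S : X -> Prop) : Y -> Prop :=
  fun y => exists x, S x /\ f x = y.

Lemma finite_has_min_below (X : Poset) (l : list X) :
  forall P : X -> Prop, (forall x, P x -> In x l) ->
  forall x, P x -> exists m, minset P m /\ le m x.
Proof.
  induction l as [|a l IH]; intros P HP x Px.
  - destruct (HP x Px).
  - set (P' := fun y => P y /\ y <> a).
    assert (HP' : forall y, P' y -> In y l).
    { intros y [Py Hy]; destruct (HP y Py); [congruence|assumption]. }
    destruct (classic (exists y, P' y /\ le y x)) as [[y [Py' Hyx]]|Hno].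
    + destruct (IH P' HP' y Py') as [m [[Pm' Hmin] Hmy]].
      destruct (classic (P a /\ le a m)) as [[Pa Ham]|Hnam].
      * exists a; split; [split; [exact Pa|]|].
        -- intros z Pz Hza.
           destruct (classic (z = a)) as [->|Hz]; [reflexivity|].
           assert (z = m) by (apply Hmin; [split; assumption| eapply le_trans; eauto]).
           subst z. exfalso. apply (proj2 Pm'). apply le_antisym; assumption.
        -- eapply le_trans; [exact Ham| eapply le_trans; eauto].
      * exists m; split; [split; [exact (proj1 Pm')|]|].
        -- intros z Pz Hzm.
           destruct (classic (z = a)) as [->|Hz].
           ++ exfalso; apply Hnam; split; assumption.
           ++ apply Hmin; [split; assumption|assumption].
        -- eapply le_trans; eauto.
    + assert (x = a).
      { destruct (classic (x = a)) as [h|h]; [exact h|].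
        exfalso; apply Hno; exists x; split; [split; assumption| apply le_refl]. }
      exists x; split; [split; [exact Px|]| apply le_refl].
      intros z Pz Hzx.
      destruct (classic (z = a)) as [h|h]; [congruence|].
      exfalso; apply Hno; exists z; split; [split; assumption|assumption].
Qed.

Lemma isM_minset_image {X Y : Poset} (f : Mono X Y) (S : X -> Prop) :
  isM S -> isM (minset (image f S)).
Proof.
  intros [[x Sx] [[l Hl] Hac]].
  assert (Hfin : forall y, image f S y -> In y (map f l)).
  { intros y [z [Sz <-]]. apply in_map. auto. }
  split; [|split].
  - destruct (finite_has_min_below Y (map f l) (image f S) Hfin (f x)) as [m [Hm _]].
    + exists x; split; auto.
    + exists m; exact Hm.
  - exists (map f l); intros y [Hy _]; auto.
  - intros a b [Ha _] [Hb Hbmin] Hab Hle. apply Hab. apply Hbmin; assumption.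
Qed.

Definition Mmin {X Y : Poset} (f : Mono X Y) (S : MM X) : MM Y :=
  exist _ (minset (image f (proj1_sig S))) (isM_minset_image f (proj1_sig S) (proj2_sig S)).

From Stdlib Require Import List Classical FunctionalExtensionality PropExtensionality ProofIrrelevance.

(* The lax structure is the cartesian product of antichains, mu(S, T) = S x T,
   with eps picking the only antichain {tt} of 1.  A product of antichains is an
   antichain, and the minimal elements of a product are the products of the
   minimal elements, which gives naturality.  The identity, the associator and
   the unitors map (products of) antichains onto antichains, on which taking
   minimal elements does nothing.  Functoriality rests on one fact about a
   finite subset Q: every element of Q lies above a minimal one, so for
   monotone g the sets g(Q) and g(Q_o) have the same minimal elements. *)

Definition antichain {X : Poset} (P : X -> Prop) : Prop :=
  forall x y, P x -> P y -> x <> y -> ~ le x y.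

Lemma pred_ext {T : Type} (P Q : T -> Prop) : (forall x, P x <-> Q x) -> P = Q.
Proof.
  intros H; apply functional_extensionality; intros x.
  apply propositional_extensionality, H.
Qed.

Lemma MM_ext (X : Poset) (A B : MM X) : proj1_sig A = proj1_sig B -> A = B.
Proof.
  destruct A as [A HA], B as [B HB]; simpl; intros <-.
  f_equal; apply proof_irrelevance.
Qed.

Lemma MM_antichain (X : Poset) (S : MM X) : antichain (proj1_sig S).
Proof. exact (proj2 (proj2 (proj2_sig S))). Qed.

Lemma MM_finite (X : Poset) (S : MM X) : finite_set (proj1_sig S).
Proof. exact (proj1 (proj2 (proj2_sig S))). Qed.

Lemma minset_antichain (X : Poset) (P : X -> Prop) : antichain P -> minset P = P.
Proof.
  intros HP; apply pred_ext; intros x; split; [now intros [Px _]|].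
  intros Px; split; [exact Px|]; intros y Py Hyx.
  destruct (classic (y = x)) as [Heq|Hne]; [exact Heq|].
  exfalso; exact (HP y x Py Px Hne Hyx).
Qed.

Lemma finite_set_image {X Y : Type} (f : X -> Y) (S : X -> Prop) :
  finite_set S -> finite_set (image f S).
Proof.
  intros [l Hl]; exists (map f l); intros y [x [Sx <-]].
  now apply in_map, Hl.
Qed.

Lemma image_mid (X : Poset) (S : X -> Prop) : image (mid X) S = S.
Proof.
  apply pred_ext; intros x; split; [now intros [y [Sy <-]]|].
  intros Sx; now exists x.
Qed.

Lemma image_mcomp {X Y Z : Poset} (g : Mono Y Z) (f : Mono X Y) (S : X -> Prop) :
  image (mcomp g f) S = image g (image f S).
Proof.
  apply pred_ext; intros z; split.
  - intros [x [Sx <-]]; exists (f x); split; [now exists x | reflexivity].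
  - intros [y [[x [Sx <-]] <-]]; now exists x.
Qed.

Lemma minset_image_minset {X Y : Poset} (g : Mono X Y) (Q : X -> Prop) :
  finite_set Q -> minset (image g (minset Q)) = minset (image g Q).
Proof.
  intros [l Hl].
  assert (below_min : forall q, Q q -> exists m, minset Q m /\ le m q)
    by (intros q Qq; exact (finite_has_min_below X l Q Hl q Qq)).
  apply pred_ext; intros z; split.
  - intros [[m [[Qm _] <-]] Hmin]; split; [now exists m|].
    intros w [q [Qq <-]] Hqm.
    destruct (below_min q Qq) as [m' [Hm' Hm'q]].
    assert (Hgm' : g m' = g m).
    { apply Hmin; [exists m'; split; [exact Hm' | reflexivity] | exact (le_trans _ _ _ _ (mfun_mono _ _ g _ _ Hm'q) Hqm)]. }
    apply le_antisym; [exact Hqm|].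
    rewrite <- Hgm'; exact (mfun_mono _ _ g _ _ Hm'q).
  - intros [[q [Qq <-]] Hmin].
    destruct (below_min q Qq) as [m [Hm Hmq]].
    assert (Hgm : g m = g q).
    { apply Hmin; [exists m; split; [exact (proj1 Hm) | reflexivity] | exact (mfun_mono _ _ g _ _ Hmq)]. }
    split; [exists m; now split|].
    intros w [m' [[Qm' _] <-]] Hle; apply Hmin; [now exists m' | exact Hle].
Qed.

Definition prod_set {X Y : Poset} (S : X -> Prop) (T : Y -> Prop) : PProd X Y -> Prop :=
  fun p => S (fst p) /\ T (snd p).

Lemma isM_prod_set {X Y : Poset} (S : X -> Prop) (T : Y -> Prop) :
  isM S -> isM T -> isM (prod_set S T).
Proof.
  intros [[x Sx] [[l1 H1] A1]] [[y Ty] [[l2 H2] A2]]; split; [|split].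
  - exists ((x, y) : PProd X Y); now split.
  - exists (list_prod l1 l2); intros [a b] [Sa Tb]; apply in_prod; auto.
  - intros [a b] [c d] [Sa Tb] [Sc Td] Hne [Hac Hbd]; simpl in *.
    destruct (classic (a = c)) as [<-|Hac'].
    + destruct (classic (b = d)) as [<-|Hbd']; [now apply Hne | exact (A2 b d Tb Td Hbd' Hbd)].
    + exact (A1 a c Sa Sc Hac' Hac).
Qed.

Lemma minset_prod_set {X Y : Poset} (P : X -> Prop) (Q : Y -> Prop) :
  minset (prod_set P Q) = prod_set (minset P) (minset Q).
Proof.
  apply pred_ext; intros [a b]; split.
  - intros [[Pa Qb] Hmin]; split; split; simpl in *; auto.
    + intros a' Pa' Ha'.
      exact (f_equal fst (Hmin ((a', b) : PProd X Y) (conj Pa' Qb) (conj Ha' (le_refl _ b)))).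
    + intros b' Qb' Hb'.
      exact (f_equal snd (Hmin ((a, b') : PProd X Y) (conj Pa Qb') (conj (le_refl _ a) Hb'))).
  - intros [[Pa Hmina] [Qb Hminb]]; split; [now split|].
    intros [a' b'] [Pa' Qb'] [Ha' Hb']; simpl in *.
    f_equal; [exact (Hmina a' Pa' Ha') | exact (Hminb b' Qb' Hb')].
Qed.

Lemma image_mprod {X X' Y Y' : Poset} (f : Mono X X') (g : Mono Y Y')
    (S : X -> Prop) (T : Y -> Prop) :
  image (mprod f g) (prod_set S T) = prod_set (image f S) (image g T).
Proof.
  apply pred_ext; intros [a b]; split.
  - intros [[x y] [[Sx Ty] He]]; injection He as <- <-.
    split; [now exists x | now exists y].
  - intros [[x [Sx Hx]] [y [Ty Hy]]]; simpl in *; subst a b.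
    now exists ((x, y) : PProd X Y).
Qed.

Lemma image_massoc (X Y Z : Poset) (S : X -> Prop) (T : Y -> Prop) (U : Z -> Prop) :
  image (massoc X Y Z) (prod_set (prod_set S T) U) = prod_set S (prod_set T U).
Proof.
  apply pred_ext; intros [a [b c]]; split.
  - intros [[[x y] z] [[[Sx Ty] Uz] He]]; injection He as <- <- <-.
    repeat split; assumption.
  - intros [Sa [Tb Uc]]; exists (((a, b), c) : PProd (PProd X Y) Z).
    repeat split; assumption.
Qed.

Lemma image_mlunit (X : Poset) (S : X -> Prop) :
  image (mlunit X) (prod_set (fun _ : One => True) S) = S.
Proof.
  apply pred_ext; intros x; split.
  - now intros [[u y] [[_ Sy] <-]].
  - intros Sx; now exists ((tt, x) : PProd One X).
Qed.

Lemma image_mrunit (X : Poset) (S : X -> Prop) :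
  image (mrunit X) (prod_set S (fun _ : One => True)) = S.
Proof.
  apply pred_ext; intros x; split.
  - now intros [[y u] [[Sy _] <-]].
  - intros Sx; now exists ((x, tt) : PProd X One).
Qed.

Lemma Mmin_of_image (X Y : Poset) (f : Mono X Y) (S : MM X) (T : MM Y) :
  image f (proj1_sig S) = proj1_sig T -> Mmin f S = T.
Proof.
  intros Himg; apply MM_ext; simpl.
  rewrite Himg; apply minset_antichain, MM_antichain.
Qed.

Definition Mprod (X Y : Poset) (p : (MM X * MM Y)%type) : MM (PProd X Y) :=
  exist _ (prod_set (proj1_sig (fst p)) (proj1_sig (snd p)))
    (isM_prod_set _ _ (proj2_sig (fst p)) (proj2_sig (snd p))).

Lemma isM_One_full : @isM One (fun _ => True).
Proof.
  split; [now exists tt | split].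
  - exists (tt :: nil); intros [] _; now left.
  - intros [] [] _ _ Hne; now destruct Hne.
Qed.

Definition Munit (_ : unit) : MM One := exist _ (fun _ => True) isM_One_full.

Theorem propositionD20 :
  (forall (X : Poset) (S : MM X), Mmin (mid X) S = S) /\
  (forall (X Y Z : Poset) (f : Mono X Y) (g : Mono Y Z) (S : MM X),
      Mmin (mcomp g f) S = Mmin g (Mmin f S)) /\
  exists (eps : unit -> MM One)
         (mu : forall X Y : Poset, (MM X * MM Y)%type -> MM (PProd X Y)),
    (forall (X X' Y Y' : Poset) (f : Mono X X') (g : Mono Y Y') (S : MM X) (T : MM Y),
        Mmin (mprod f g) (mu X Y (S, T)) = mu X' Y' (Mmin f S, Mmin g T)) /\
    (forall (X Y Z : Poset) (S : MM X) (T : MM Y) (U : MM Z),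
        Mmin (massoc X Y Z) (mu (PProd X Y) Z (mu X Y (S, T), U))
        = mu X (PProd Y Z) (S, mu Y Z (T, U))) /\
    (forall (X : Poset) (S : MM X), Mmin (mlunit X) (mu One X (eps tt, S)) = S) /\
    (forall (X : Poset) (S : MM X), Mmin (mrunit X) (mu X One (S, eps tt)) = S).
Proof.
  split; [|split].
  - intros X S; apply Mmin_of_image, image_mid.
  - intros X Y Z f g S; apply MM_ext; unfold Mmin; cbn [proj1_sig].
    now rewrite image_mcomp, minset_image_minset by apply finite_set_image, MM_finite.
  - exists Munit, Mprod; split; [|split; [|split]].
    + intros X X' Y Y' f g S T; apply MM_ext; unfold Mmin, Mprod; cbn [proj1_sig fst snd].
      now rewrite image_mprod, minset_prod_set.
    + intros X Y Z S T U; apply Mmin_of_image, image_massoc.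
    + intros X S; apply Mmin_of_image, image_mlunit.
    + intros X S; apply Mmin_of_image, image_mrunit.
Qed.
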